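(* Let $a\in\mathcal A$. If area $a$'s decentralized DC-OPF problem has a feasible solution with $T_{a,(i,j)}=0$ for all $(i,j)\in\mathcal T_a$, then for each tieline $(i,j)\in\mathcal T_a$ there exists a critical price $\bar\mu_{(i,j)}>0$ such that whenever $\mu_{(i,j)}\ge\bar\mu_{(i,j)}$, the optimal solution of the decentralized DC-OPF problem has $T_{a,(i,j)}=0$.
   Context: Area $a$ of a multi-area power system has buses $\mathcal N_a$, internal lines $\mathcal F_a$ with reactances $x_{a,(i,j)}>0$ and limits $\overline F_{a,(i,j)}$, voltage angles $\theta_a$, known loads $D_a$, admittance matrix $B_a$, generators $\mathcal G_a$ with outputs $P_a$, limits $\underline P_a,\overline P_a$, incidence matrix $M_a$ and strictly convex cost functions $C_{a,g}$. Its tielines form the set $\mathcal T_a$ of pairs $(i,j)$ with $i$ a bus of $a$ and $j$ a bus of another area $a'$; flows $T_{a,(i,j)}$ (vector $T_a$, incidence matrix $R_a$), reactances $\bar x_{a,(i,j)}$, capacities $\bar T_{a,(i,j)}$. Given parameters $\alpha_{a',j}$, $\theta_{a',j}$ for each $(i,j)\in\mathcal T_a$ and capacity prices $\mu_{(i,j)}\ge 0$, the decentralized DC-OPF of area $a$ is: minimize $\sum_{g\in\mathcal G_a}C_{a,g}(P_{a,g})-\sum_{(i,j)\in\mathcal T_a}\alpha_{a',j}T_{a,(i,j)}+\sum_{(i,j)\in\mathcal T_a}\frac{\mu_{(i,j)}}{2}(|T_{a,(i,j)}|-\bar T_{a,(i,j)})$ over $P_a,\theta_a,T_a$ subject to $B_a\theta_a+R_aT_a=M_aP_a-D_a$,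 $\underline P_a\le P_a\le\overline P_a$, $-\overline F_{a,(i,j)}\le(\theta_{a,i}-\theta_{a,j})/x_{a,(i,j)}\le\overline F_{a,(i,j)}$ for $(i,j)\in\mathcal F_a$, $T_{a,(i,j)}=(\theta_{a,i}-\theta_{a',j})/\bar x_{a,(i,j)}$ for $(i,j)\in\mathcal T_a$, and $\theta_{a,1}=0$ if $a=1$. *)

From HB Require Import structures.
From mathcomp Require Import all_boot all_order all_algebra.
From mathcomp Require Import reals.
Set Implicit Arguments. Unset Strict Implicit. Unset Printing Implicit Defensive.
Import Order.TTheory GRing.Theory Num.Theory.
Local Open Scope ring_scope.

(* Buses: 'I_nb.+1, bus "1" of the paper is ord0.
   G : generators, located at bus gbus g (incidence matrix M_a).
   Tl : tielines (i,j) with i = tbus t a bus of area a and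
        j = text t a bus of another area (external buses of type Ext). *)
Record area (R : realType) (nb : nat) (L G Tl : finType) (Ext : Type) := Area {
  lfrom : L -> 'I_nb.+1;
  lto   : L -> 'I_nb.+1;
  x     : L -> R;
  Fbar  : L -> R;
  D     : 'I_nb.+1 -> R;
  gbus  : G -> 'I_nb.+1;
  Pmin  : G -> R;
  Pmax  : G -> R;
  C     : G -> R -> R;
  tbus  : Tl -> 'I_nb.+1;
  text  : Tl -> Ext;
  xbar  : Tl -> R;
  Tbar  : Tl -> R
}.

Definition strictly_convex (R : realType) (f : R -> R) :=
  forall (u v s : R), u != v -> 0 < s < 1 ->
    f (s * u + (1 - s) * v) < s * f u + (1 - s) * f v.

Section Area.
Variables (R : realType) (nb : nat) (L G Tl : finType) (Ext : Type).
Variable (A : area R nb L G Tl Ext).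

(* (B_a theta)_i : DC admittance (susceptance Laplacian) matrix applied to theta *)
Definition Btheta (th : 'I_nb.+1 -> R) (i : 'I_nb.+1) : R :=
  \sum_(l : L | lfrom A l == i) (th (lfrom A l) - th (lto A l)) / x A l
  - \sum_(l : L | lto A l == i) (th (lfrom A l) - th (lto A l)) / x A l.

Definition RT (T : Tl -> R) (i : 'I_nb.+1) : R :=
  \sum_(t : Tl | tbus A t == i) T t.

Definition MP (P : G -> R) (i : 'I_nb.+1) : R :=
  \sum_(g : G | gbus A g == i) P g.

Definition feasible (a : nat) (theta_ext : Ext -> R)
    (P : G -> R) (th : 'I_nb.+1 -> R) (T : Tl -> R) : Prop :=
  [/\ forall i, Btheta th i + RT T i = MP P i - D A i,
      forall g, Pmin A g <= P g <= Pmax A g,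
      forall l, - Fbar A l <= (th (lfrom A l) - th (lto A l)) / x A l <= Fbar A l,
      forall t, T t = (th (tbus A t) - theta_ext (text A t)) / xbar A t
    & a = 1%N -> th ord0 = 0].

Definition objective (alpha : Ext -> R) (mu : Tl -> R)
    (P : G -> R) (T : Tl -> R) : R :=
  \sum_(g : G) C A g (P g) - \sum_(t : Tl) alpha (text A t) * T t
  + \sum_(t : Tl) mu t / 2 * (`|T t| - Tbar A t).

Definition optimal (a : nat) (theta_ext alpha : Ext -> R) (mu : Tl -> R)
    (P : G -> R) (th : 'I_nb.+1 -> R) (T : Tl -> R) : Prop :=
  feasible a theta_ext P th T /\
  forall P' th' T', feasible a theta_ext P' th' T' ->
    objective alpha mu P T <= objective alpha mu P' T'.

End Area.

Definition upd (R : realType) (Tl : finType) (mu : Tl -> R) (t : Tl) (m : R) : Tl -> R :=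
  fun k => if k == t then m else mu k.

From HB Require Import structures.
From mathcomp Require Import all_boot all_order all_algebra.
From mathcomp Require Import reals.
From mathcomp Require Import ring lra.
Set Implicit Arguments. Unset Strict Implicit. Unset Printing Implicit Defensive.
Import Order.TTheory GRing.Theory Num.Theory.
Local Open Scope ring_scope.

(* Exact penalty.  Every feasible point with flow [T t] on the tieline [t] lies within
   [K * |T t|] of the polyhedron of feasible points with no flow on [t]; this is
   Hoffman's error bound for systems of affine inequalities, proved by
   Fourier-Motzkin elimination of one variable at a time.  The objective without
   the price on [t] is Lipschitz on the feasible set, with some constant [W],
   because a convex cost has bounded slopes on [Pmin, Pmax].  Moving to the nearby
   point with no flow on [t] therefore raises that part of the objective by at most
   [W * K * |T t|] while saving [m / 2 * |T t|], so for [m > 2 * W * K] no optimum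
   can carry flow on [t]. *)

Section AffineForms.
Variables (R : realFieldType) (V : eqType).
Implicit Types (s : seq V) (f g : (V -> R) -> R) (z : V -> R).

Definition affine_on s f :=
  exists (a : V -> R) (b : R), forall z, f z = \sum_(w <- s) a w * z w + b.

Definition coef f (w : V) : R := f (fun u => (u == w)%:R) - f (fun=> 0).

Lemma affine_on_eq s f g : f =1 g -> affine_on s f -> affine_on s g.
Proof. by move=> fg [a [b fE]]; exists a, b => z; rewrite -fg. Qed.

Lemma affine_on_cst s c : affine_on s (fun=> c).
Proof. by exists (fun=> 0), c => z; rewrite big1 ?add0r // => w _; rewrite mul0r. Qed.

Lemma affine_onD s f g :
  affine_on s f -> affine_on s g -> affine_on s (fun z => f z + g z).
Proof.
move=> [a [b fE]] [a' [b' gE]]; exists (fun w => a w + a' w), (b + b') => z.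
rewrite fE gE addrACA -big_split; congr (_ + _).
by apply: eq_bigr => w _; rewrite mulrDl.
Qed.

Lemma affine_onMl s c f : affine_on s f -> affine_on s (fun z => c * f z).
Proof.
move=> [a [b fE]]; exists (fun w => c * a w), (c * b) => z.
by rewrite fE mulrDr mulr_sumr; congr (_ + _); apply: eq_bigr => w _; rewrite mulrA.
Qed.

Lemma affine_onMr s c f : affine_on s f -> affine_on s (fun z => f z * c).
Proof. by move/(affine_onMl c); apply: affine_on_eq => z; rewrite mulrC. Qed.

Lemma affine_onN s f : affine_on s f -> affine_on s (fun z => - f z).
Proof. by move/(affine_onMl (-1)); apply: affine_on_eq => z; rewrite mulN1r. Qed.

Lemma affine_onB s f g :
  affine_on s f -> affine_on s g -> affine_on s (fun z => f z - g z).
Proof. by move=> af /affine_onN; apply: affine_onD. Qed.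

Lemma affine_on_sum s (J : Type) (r : seq J) (P : pred J) (F : J -> (V -> R) -> R) :
  (forall j, affine_on s (F j)) -> affine_on s (fun z => \sum_(j <- r | P j) F j z).
Proof.
move=> aF; elim: r => [|j r IH].
  by apply: affine_on_eq (affine_on_cst s 0) => z; rewrite big_nil.
case Pj: (P j).
  by apply: affine_on_eq (affine_onD (aF j) IH) => z; rewrite big_cons Pj.
by apply: affine_on_eq IH => z; rewrite big_cons Pj.
Qed.

Lemma sum_indicator s w (F : V -> R) : uniq s -> w \in s ->
  \sum_(u <- s) (u == w)%:R * F u = F w.
Proof.
elim: s => [//|u s IH] /= /andP[uNs us]; rewrite in_cons big_cons.
have [<- _|uw /= ws] := eqVneq u w; last by rewrite mul0r add0r IH.
rewrite mul1r big_seq big1 ?addr0 // => u' u's.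
by rewrite (_ : u' == u = false) ?mul0r //; apply: contraNF uNs => /eqP <-.
Qed.

Lemma affine_on_coord s w : uniq s -> w \in s -> affine_on s (fun z => z w).
Proof. by move=> us ws; exists (fun u => (u == w)%:R), 0 => z; rewrite addr0 sum_indicator. Qed.

Lemma affine_on_coefE s f : uniq s -> affine_on s f ->
  forall z, f z = \sum_(w <- s) coef f w * z w + f (fun=> 0).
Proof.
move=> us [a [b fE]] z.
have f0 : f (fun=> 0) = b by rewrite fE big1 ?add0r // => w _; rewrite mulr0.
rewrite fE f0; congr (_ + _); rewrite big_seq [RHS]big_seq.
apply: eq_bigr => w ws; rewrite /coef fE f0 addrK; congr (_ * _).
by under eq_bigr do rewrite mulrC; rewrite sum_indicator.
Qed.

Lemma affine_on_lipschitz s f z z' d : uniq s -> affine_on s f ->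
  (forall w, w \in s -> `|z' w - z w| <= d) ->
  `|f z' - f z| <= (\sum_(w <- s) `|coef f w|) * d.
Proof.
move=> us af zz'; rewrite (affine_on_coefE us af z) (affine_on_coefE us af z') opprD addrACA subrr addr0.
rewrite -sumrB mulr_suml (le_trans (ler_norm_sum _ _ _)) // big_seq [leRHS]big_seq.
by apply: ler_sum => w ws; rewrite -mulrBr normrM ler_wpM2l ?zz'.
Qed.

End AffineForms.

Lemma fourier_motzkin_step (R : realFieldType) (I : finType) (al c : I -> R) (u E : R) :
  0 <= E ->
  (forall i, al i = 0 -> c i <= 0) ->
  (forall i j, 0 < al i -> al j < 0 -> - al j * c i + al i * c j <= 0) ->
  (forall i, al i * u + c i <= E) ->
  exists2 u', forall i, al i * u' + c i <= 0 & `|u' - u| <= E * \sum_i `|al i|^-1.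
Proof.
move=> E0 c0 cij cu.
pose b i := - c i / al i.
have albE i : al i != 0 -> al i * b i = - c i by move=> ?; rewrite mulrC divfK.
set e := E * \sum_i `|al i|^-1.
have e0 : 0 <= e by rewrite mulr_ge0 // sumr_ge0 // => i _; rewrite invr_ge0.
have le_e i x : al i != 0 -> `|al i| * x <= E -> x <= e.
  move=> ai0 aix; have ai : 0 < `|al i| by rewrite normr_gt0.
  have : x <= E / `|al i| by rewrite ler_pdivlMr // mulrC.
  move/le_trans; apply; rewrite ler_wpM2l // (bigD1 i) //= lerDl.
  by rewrite sumr_ge0 // => k _; rewrite invr_ge0.
have bji i j : 0 < al i -> al j < 0 -> b j <= b i.
  move=> ai aj; have aij : al i * al j < 0 by rewrite pmulr_rlt0.
  rewrite -subr_ge0 -(nmulr_rle0 _ aij); have := cij i j ai aj.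
  rewrite -[c i]opprK -[c j]opprK -(albE i (lt0r_neq0 ai)) -(albE j (ltr0_neq0 aj)).
  lra.
(* [u'] is [u] clamped to the interval [max_{al j < 0} b j, min_{al i > 0} b i]. *)
pose lo := \big[Order.min/u]_(i | 0 < al i) b i.
pose u' := \big[Order.max/lo]_(j | al j < 0) b j.
have u'_le i : 0 < al i -> u' <= b i.
  move=> ai; apply: bigmax_le => [|j aj]; last exact: bji.
  exact: bigmin_le_cond.
have le_u' j : al j < 0 -> b j <= u' by move=> aj; apply: le_bigmax_cond.
exists u'.
  move=> i; have [ai|ai|ai] := ltgtP (al i) 0; last by rewrite ai mul0r add0r c0.
  - have := le_u' i ai; have := albE i (ltr0_neq0 ai); nra.
  - have := u'_le i ai; have := albE i (lt0r_neq0 ai); nra.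
have u'_le_u : u' <= u + e.
  apply: bigmax_le => [|j aj].
    by apply: le_trans (bigmin_le_id _ _ _ _) _; rewrite lerDl.
  rewrite -lerBlDl; apply: (le_e j); first exact: ltr0_neq0.
  rewrite ltr0_norm //; apply: le_trans (cu j); have := albE j (ltr0_neq0 aj); nra.
have u_le_u' : u - e <= u'.
  apply: le_trans (bigmax_ge_id _ _ _ _); apply: le_bigmin => [|i ai].
    by rewrite gerBl.
  rewrite lerBlDr -lerBlDl; apply: (le_e i); first exact: lt0r_neq0.
  rewrite gtr0_norm //; apply: le_trans (cu i); have := albE i (lt0r_neq0 ai); nra.
by rewrite ler_norml; apply/andP; split; lra.
Qed.

Section ConvexSlopes.
Variable R : realFieldType.
Implicit Types (f : R -> R) (p q y lo hi : R).

Definition convex_fun f := forall u v s, u != v -> 0 < s < 1 ->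
  f (s * u + (1 - s) * v) <= s * f u + (1 - s) * f v.

Lemma convex_fun_three_points f p q y : convex_fun f -> p < q -> q < y ->
  (y - p) * f q <= (y - q) * f p + (q - p) * f y.
Proof.
move=> cf pq qy; have yp : 0 < y - p by lra.
pose s := (y - q) / (y - p).
have s01 : 0 < s < 1 by apply/andP; split; rewrite /s ?ltr_pdivrMr ?divr_gt0; lra.
have py : p != y by rewrite lt_eqF // (lt_trans pq qy).
have := cf p y s py s01.
have -> : s * p + (1 - s) * y = q by rewrite /s; field; rewrite gt_eqF.
move/(ler_wpM2l (ltW yp)); congr (_ <= _); rewrite /s; by field; rewrite gt_eqF.
Qed.

Lemma convex_fun_slope_le f p q hi : convex_fun f -> p < q -> q <= hi ->
  f q - f p <= (f (hi + 1) - f hi) * (q - p).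
Proof.
move=> cf pq qhi; have phi : p < hi by lra.
have c : 0 < hi + 1 - p by lra.
have chord := convex_fun_three_points cf pq (_ : q < hi + 1).
have slope := convex_fun_three_points cf phi (_ : hi < hi + 1).
have {chord} : (hi + 1 - p) * (f q - f p) <= (q - p) * (f (hi + 1) - f p).
  by have := chord ltac:(lra); lra.
have {slope} : f (hi + 1) - f p <= (hi + 1 - p) * (f (hi + 1) - f hi).
  by have := slope ltac:(lra); lra.
move=> slope chord; rewrite -(ler_pM2l c); apply: le_trans chord _.
have -> : (hi + 1 - p) * ((f (hi + 1) - f hi) * (q - p))
  = (q - p) * ((hi + 1 - p) * (f (hi + 1) - f hi)) by ring.
by apply: ler_wpM2l => //; lra.
Qed.

Lemma convex_fun_opp f : convex_fun f -> convex_fun (fun y => f (- y)).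
Proof.
move=> cf u v s uv s01; rewrite opprD -!mulrN.
by apply: cf s01; rewrite eqr_opp.
Qed.

Lemma convex_fun_lipschitz f lo hi p q : convex_fun f ->
  lo <= p <= hi -> lo <= q <= hi ->
  f q - f p <= (`|f (hi + 1) - f hi| + `|f lo - f (lo - 1)|) * `|q - p|.
Proof.
move=> cf /andP[lop phi] /andP[loq qhi].
have [pq|qp|<-] := ltgtP p q; last by rewrite !subrr normr0 mulr0.
- apply: (le_trans (convex_fun_slope_le cf pq qhi)).
  rewrite (@gtr0_norm _ (q - p)) ?subr_gt0 // ler_wpM2r ?subr_ge0 ?(ltW pq) //.
  by apply: le_trans (ler_norm _) _; rewrite lerDl.
- have := convex_fun_slope_le (convex_fun_opp cf) (_ : - p < - q) (_ : - q <= - lo).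
  rewrite !opprK opprD opprK => /(_ _ _)/le_trans; apply; rewrite ?ltrN2 ?lerN2 //.
  rewrite (@ltr0_norm _ (q - p)) ?subr_lt0 // opprB [- q + p]addrC.
  rewrite ler_wpM2r ?subr_ge0 ?(ltW qp) //.
  by apply: le_trans (ler_norm _) _; rewrite [X in _ <= _ + X]distrC lerDr.
Qed.

End ConvexSlopes.

Lemma strictly_convex_convex_fun (R : realType) (f : R -> R) :
  strictly_convex f -> convex_fun f.
Proof. by move=> cf u v s uv s01; apply/ltW/cf. Qed.

Section FourierMotzkinElimination.
Variables (R : realFieldType) (V : eqType) (I : finType).
Implicit Types (s : seq V) (f : (V -> R) -> R) (z : V -> R).

Definition affine_part s f z : R := \sum_(w <- s) coef f w * z w + f (fun=> 0).

Lemma affine_on_affine_part s f : affine_on s (affine_part s f).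
Proof. by exists (coef f), (f (fun=> 0)). Qed.

(* Elimination of the coordinate [v]: the constraints free of [v] are kept and every
   pair with [v]-coefficients of opposite signs is combined so that [v] cancels; all
   other indices give the trivial constraint [0 <= 0]. *)
Definition fm_eliminate (v : V) s (h : I -> (V -> R) -> R) (k : I + I * I) z : R :=
  let al i := coef (h i) v in
  match k with
  | inl i => if al i == 0 then affine_part s (h i) z else 0
  | inr (i, j) => if (0 < al i) && (al j < 0) then
      - al j * affine_part s (h i) z + al i * affine_part s (h j) z else 0
  end.

Variables (v : V) (s : seq V) (h : I -> (V -> R) -> R).
Hypotheses (vNs : v \notin s) (us : uniq s).
Hypothesis h_aff : forall i, affine_on (v :: s) (h i).
Local Notation al i := (coef (h i) v).

Lemma affine_part_split i z : h i z = al i * z v + affine_part s (h i) z.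
Proof.
by rewrite (affine_on_coefE _ (h_aff i)) /= ?vNs // big_cons addrA.
Qed.

Lemma affine_part_set i z u :
  affine_part s (h i) [eta z with v |-> u] = affine_part s (h i) z.
Proof.
congr (_ + _); apply: eq_big_seq => w ws /=.
by rewrite ifN //; apply: contraNneq vNs => <-.
Qed.

Lemma affine_on_fm_eliminate k : affine_on s (fm_eliminate v s h k).
Proof.
rewrite /fm_eliminate; case: k => [i|[i j]]; [case: (al i == 0) | case: (_ && _)];
  try exact: affine_on_cst; try exact: affine_on_affine_part.
by apply: affine_onD; apply: affine_onMl; apply: affine_on_affine_part.
Qed.

Lemma fm_eliminate_le z r : 0 <= r -> (forall i, h i z <= r) ->
  forall k, fm_eliminate v s h k z <= (1 + 2 * \sum_i `|al i|) * r.
Proof.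
move=> r0 hz; have S0 : 0 <= \sum_i `|al i| by rewrite sumr_ge0.
have al_le i : `|al i| <= \sum_i `|al i| by rewrite (bigD1 i) //= lerDl sumr_ge0.
case=> [i|[i j]] /=.
  case: eqP => [ai0|_]; last by rewrite mulr_ge0 // addr_ge0 // mulr_ge0.
  have := hz i; rewrite affine_part_split ai0 mul0r add0r => /le_trans; apply.
  by rewrite ler_peMl // lerDl mulr_ge0.
case: andP => [[ai aj]|_]; last by rewrite mulr_ge0 // addr_ge0 // mulr_ge0.
have -> : - al j * affine_part s (h i) z + al i * affine_part s (h j) z
        = - al j * h i z + al i * h j z by rewrite !affine_part_split; ring.
have := al_le i; have := al_le j; rewrite (gtr0_norm ai) (ltr0_norm aj) => aj_le ai_le.
have nj : 0 <= - al j by rewrite oppr_ge0; exact: ltW.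
have Hi := ler_wpM2l nj (hz i); have Hj := ler_wpM2l (ltW ai) (hz j).
have : (al i - al j) * r <= (2 * \sum_i `|al i|) * r by rewrite ler_wpM2r //; lra.
lra.
Qed.

Lemma fm_eliminate_lift z y r d : 0 <= r -> 0 <= d ->
  (forall i, h i z <= r) -> (forall k, fm_eliminate v s h k y <= 0) ->
  (forall w, w \in s -> `|y w - z w| <= d) ->
  let Lam := \sum_i \sum_(w <- s) `|coef (affine_part s (h i)) w| in
  exists2 u, forall i, h i [eta y with v |-> u] <= 0 &
    `|u - z v| <= (r + Lam * d) * \sum_i `|al i|^-1.
Proof.
move=> r0 d0 hz hy yz Lam.
have Lam0 : 0 <= Lam by rewrite sumr_ge0 // => i _; rewrite sumr_ge0.
have part_lip i :
    `|affine_part s (h i) y - affine_part s (h i) z| <= Lam * d.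
  apply: le_trans (affine_on_lipschitz us (affine_on_affine_part s (h i)) yz) _.
  by rewrite ler_wpM2r // /Lam (bigD1 i) //= lerDl sumr_ge0 // => k _; rewrite sumr_ge0.
pose c i := affine_part s (h i) y.
have E0 : 0 <= r + Lam * d by rewrite addr_ge0 ?mulr_ge0.
have c0 i : al i = 0 -> c i <= 0.
  by move=> ai0; have := hy (inl i); rewrite /fm_eliminate ai0 eqxx.
have cij i j : 0 < al i -> al j < 0 -> - al j * c i + al i * c j <= 0.
  by move=> ai aj; have := hy (inr (i, j)); rewrite /fm_eliminate ai aj.
have cz i : al i * z v + c i <= r + Lam * d.
  have := hz i; have := part_lip i; rewrite affine_part_split /c.
  by have := ler_norm (affine_part s (h i) y - affine_part s (h i) z); lra.
have [u hu du] := fourier_motzkin_step E0 c0 cij cz.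
by exists u => // i; rewrite affine_part_split /= eqxx affine_part_set.
Qed.

End FourierMotzkinElimination.

Theorem hoffman_error_bound (R : realFieldType) (V : eqType) (s : seq V) :
  uniq s -> forall (I : finType) (h : I -> (V -> R) -> R),
  (forall i, affine_on s (h i)) -> (exists z0, forall i, h i z0 <= 0) ->
  exists2 K, 0 <= K & forall z r, 0 <= r -> (forall i, h i z <= r) ->
    exists2 z', forall i, h i z' <= 0 & forall w, w \in s -> `|z' w - z w| <= K * r.
Proof.
elim: s => [_ I h h_aff [z0 hz0]|v s IH /andP[vNs us] I h h_aff [z0 hz0]].
  exists 0 => // z r _ _; exists z => // i.
  by have [a [b hE]] := h_aff i; have := hz0 i; rewrite !hE !big_nil.
have elim_feas k : fm_eliminate v s h k z0 <= 0.
  by have := fm_eliminate_le vNs us h_aff (lexx 0) hz0 k; rewrite mulr0.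
have [K' K'0 HK'] := IH us _ _ (affine_on_fm_eliminate v s h) (ex_intro _ z0 elim_feas).
pose M := 1 + 2 * \sum_i `|coef (h i) v|.
pose Lam := \sum_i \sum_(w <- s) `|coef (affine_part s (h i)) w|.
pose Sinv := \sum_i `|coef (h i) v|^-1.
have Lam0 : 0 <= Lam by rewrite sumr_ge0 // => i _; rewrite sumr_ge0.
have Sinv0 : 0 <= Sinv by rewrite sumr_ge0 // => i _; rewrite invr_ge0.
have M0 : 0 <= M by rewrite addr_ge0 ?mulr_ge0 ?sumr_ge0.
exists (K' * M + (1 + Lam * K' * M) * Sinv).
  by rewrite addr_ge0 ?mulr_ge0 // addr_ge0 ?mulr_ge0.
move=> z r r0 hz.
have [y hy yz] := HK' z (M * r) (mulr_ge0 M0 r0) (fm_eliminate_le vNs us h_aff r0 hz).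
have [u hu uz] := fm_eliminate_lift vNs us h_aff r0 (mulr_ge0 K'0 (mulr_ge0 M0 r0)) hz hy yz.
have KMr0 : 0 <= K' * M * r by rewrite !mulr_ge0.
have LKM0 : 0 <= Lam * K' * M by rewrite !mulr_ge0.
have LSr0 : 0 <= (1 + Lam * K' * M) * Sinv * r by rewrite !mulr_ge0 // addr_ge0.
exists [eta y with v |-> u] => // w; rewrite in_cons /=; case: eqP => [-> _|_ ws].
  apply: le_trans uz _; rewrite -/Lam -/Sinv.
  have -> : (r + Lam * (K' * (M * r))) * Sinv = (1 + Lam * K' * M) * Sinv * r by ring.
  by rewrite [leRHS]mulrDl lerDr.
by apply: le_trans (yz w ws) _; rewrite mulrA [leRHS]mulrDl lerDl.
Qed.

Section AreaConstraints.
Variables (R : realType) (nb : nat) (L G Tl : finType) (Ext : Type).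
Variables (A : area R nb L G Tl Ext) (a : nat) (theta_ext : Ext -> R) (t : Tl).
Implicit Types (z : G + 'I_nb.+1 -> R) (P : G -> R) (th : 'I_nb.+1 -> R) (T : Tl -> R).

Definition gen_part z g := z (inl g).
Definition angle_part z i := z (inr i).
Definition pack_vars P th : G + 'I_nb.+1 -> R :=
  fun w => match w with inl g => P g | inr i => th i end.
Definition tie_flows z k := (angle_part z (tbus A k) - theta_ext (text A k)) / xbar A k.
Definition line_flow z l := (angle_part z (lfrom A l) - angle_part z (lto A l)) / x A l.

(* Each equation is split into two inequalities, the boolean selecting the sign; the
   extra pair of inequalities forces the flow on the tieline [t] to vanish. *)
Definition opf_index :=
  (('I_nb.+1 * bool + G * bool) + (L * bool + (bool + bool)))%type.

Definition opf_constraint (k : opf_index) z : R :=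
  let signed (b : bool) e := if b then e else - e in
  match k with
  | inl (inl (i, b)) => signed b
      (Btheta A (angle_part z) i + RT A (tie_flows z) i - MP A (gen_part z) i + D A i)
  | inl (inr (g, b)) => if b then gen_part z g - Pmax A g else Pmin A g - gen_part z g
  | inr (inl (l, b)) => if b then line_flow z l - Fbar A l else - Fbar A l - line_flow z l
  | inr (inr (inl b)) => signed b (tie_flows z t)
  | inr (inr (inr b)) => if a == 1%N then signed b (angle_part z ord0) else 0
  end.

Let vars := enum (G + 'I_nb.+1 : predArgType).

Lemma affine_on_opf_constraint k : affine_on vars (opf_constraint k).
Proof.
have coord w : affine_on vars (fun z => z w).
  by apply: affine_on_coord; rewrite ?enum_uniq ?mem_enum.
have signed b f : affine_on vars f -> affine_on vars (fun z => if b then f z else - f z).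
  by case: b => // /affine_onN.
have tie k' : affine_on vars (fun z => tie_flows z k').
  by rewrite /tie_flows /angle_part; apply/affine_onMr/affine_onB/affine_on_cst.
have line l : affine_on vars (fun z => line_flow z l).
  by rewrite /line_flow /angle_part; apply/affine_onMr/affine_onB.
case: k => [[[i b]|[g b]]|[[l b]|[b|b]]]; rewrite /opf_constraint.
- rewrite /Btheta /RT /MP; apply/signed/affine_onD/affine_on_cst; apply: affine_onB.
    apply: affine_onD; last by apply: affine_on_sum.
    by apply: affine_onB; apply: affine_on_sum => l; apply: line.
  by apply: affine_on_sum => g; apply: coord.
- by case: b; [apply: affine_onB (coord _) (affine_on_cst _ _)
              | apply: affine_onB (affine_on_cst _ _) (coord _)].
- by case: b; [apply: affine_onB (line _) (affine_on_cst _ _)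
              | apply: affine_onB (affine_on_cst _ _) (line _)].
- exact: signed.
- by case: eqP => _; [apply: signed; rewrite /angle_part | apply: affine_on_cst].
Qed.

Lemma opf_constraint_le_tie_flow P th T : feasible A a theta_ext P th T ->
  forall k, opf_constraint k (pack_vars P th) <= `|T t|.
Proof.
case=> bal Pb Fb Tf ref k; set z := pack_vars P th.
have tieE : tie_flows z =1 T by move=> k'; rewrite Tf.
have balz i : Btheta A (angle_part z) i + RT A (tie_flows z) i - MP A (gen_part z) i + D A i = 0.
  have -> : MP A (gen_part z) i = MP A P i by [].
  by rewrite /RT (eq_bigr _ (fun k _ => tieE k)) [_ + RT A T i]bal; ring.
have n0 := normr_ge0 (T t).
case: k => [[[i b]|[g b]]|[[l b]|[b|b]]]; rewrite /opf_constraint.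
- by rewrite balz oppr0; case: b.
- by have /andP[] := Pb g; case: b; rewrite /gen_part /=; lra.
- by have /andP[] := Fb l; case: b; rewrite /line_flow /angle_part /=; lra.
- by rewrite tieE; case: b => /=; [|rewrite -normrN]; exact: ler_norm.
- by case: eqP => [/ref|_] //; rewrite /angle_part /= => ->; case: b; rewrite ?oppr0.
Qed.

Lemma opf_constraint_feasible z : (forall k, opf_constraint k z <= 0) ->
  feasible A a theta_ext (gen_part z) (angle_part z) (tie_flows z) /\ tie_flows z t = 0.
Proof.
move=> hz; split; last first.
  by have := hz (inr (inr (inl true))); have := hz (inr (inr (inl false))); rewrite /=; lra.
split=> [i|g|l|//|a1].
- by have := hz (inl (inl (i, true))); have := hz (inl (inl (i, false))); rewrite /=; lra.
- by have := hz (inl (inr (g, true))); have := hz (inl (inr (g, false))); rewrite /=; lra.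
- by have := hz (inr (inl (l, true))); have := hz (inr (inl (l, false))); rewrite /= /line_flow; lra.
have := hz (inr (inr (inr true))); have := hz (inr (inr (inr false))).
by rewrite /= a1 /=; lra.
Qed.

Lemma tie_flow_error_bound :
  (exists P0 th0 T0, feasible A a theta_ext P0 th0 T0 /\ T0 t = 0) ->
  exists2 K, 0 <= K & forall P th T, feasible A a theta_ext P th T ->
    exists P' th' T', [/\ feasible A a theta_ext P' th' T', T' t = 0,
      forall g, `|P' g - P g| <= K * `|T t| & forall k, `|T' k - T k| <= K * `|T t|].
Proof.
move=> [P0 [th0 [T0 [F0 T00]]]].
have feas0 : exists z0, forall k, opf_constraint k z0 <= 0.
  by exists (pack_vars P0 th0) => k; have := opf_constraint_le_tie_flow F0 k; rewrite T00 normr0.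
have [K K0 hK] := hoffman_error_bound (enum_uniq _) affine_on_opf_constraint feas0.
pose X := 1 + \sum_k `|xbar A k|^-1.
have X_ge k : `|xbar A k|^-1 <= X.
  rewrite /X (bigD1 k) //= addrCA lerDl addr_ge0 ?sumr_ge0 // => *.
  by rewrite invr_ge0.
have X1 : 1 <= X by rewrite lerDl sumr_ge0 // => *; rewrite invr_ge0.
exists (K * X) => [|P th T F]; first by rewrite mulr_ge0 // (le_trans ler01).
have r0 := normr_ge0 (T t).
have [z' hz' near] := hK (pack_vars P th) `|T t| r0 (opf_constraint_le_tie_flow F).
have [F' T't] := opf_constraint_feasible hz'.
have Kr0 : 0 <= K * `|T t| by rewrite mulr_ge0.
exists (gen_part z'), (angle_part z'), (tie_flows z'); split => // [g|k].
  apply: le_trans (near (inl g) (mem_enum _ _)) _.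
  by rewrite mulrAC ler_peMr.
case: F => _ _ _ Tf _; rewrite Tf /tie_flows -mulrBl opprB addrA subrK normrM normfV.
rewrite mulrAC; apply: ler_pM; rewrite ?invr_ge0 //.
exact: near (inr (tbus A k)) (mem_enum _ _).
Qed.

End AreaConstraints.

Section AreaObjective.
Variables (R : realType) (nb : nat) (L G Tl : finType) (Ext : Type).
Variables (A : area R nb L G Tl Ext) (alpha : Ext -> R).
Implicit Types (mu : Tl -> R) (P : G -> R) (T : Tl -> R).

Definition cost_slope g :=
  `|C A g (Pmax A g + 1) - C A g (Pmax A g)| + `|C A g (Pmin A g) - C A g (Pmin A g - 1)|.

Lemma objectiveB mu P T P' T' :
  objective A alpha mu P' T' - objective A alpha mu P T =
  \sum_g (C A g (P' g) - C A g (P g)) +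
  \sum_k (mu k / 2 * (`|T' k| - `|T k|) - alpha (text A k) * (T' k - T k)).
Proof.
have -> : \sum_k (mu k / 2 * (`|T' k| - `|T k|) - alpha (text A k) * (T' k - T k)) =
    (\sum_k mu k / 2 * (`|T' k| - Tbar A k) - \sum_k mu k / 2 * (`|T k| - Tbar A k))
    - (\sum_k alpha (text A k) * T' k - \sum_k alpha (text A k) * T k).
  by rewrite -!sumrB; apply: eq_bigr => k _; ring.
rewrite /objective sumrB; ring.
Qed.

Lemma objective_sub_le mu P T P' T' d :
  (forall g, convex_fun (C A g)) ->
  (forall g, Pmin A g <= P g <= Pmax A g) -> (forall g, Pmin A g <= P' g <= Pmax A g) ->
  (forall g, `|P' g - P g| <= d) -> (forall k, `|T' k - T k| <= d) ->
  objective A alpha mu P' T' - objective A alpha mu P T <=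
  (\sum_g cost_slope g + \sum_k (`|alpha (text A k)| + `|mu k| / 2)) * d.
Proof.
move=> cC hP hP' dP dT; rewrite objectiveB mulrDl !mulr_suml.
apply: lerD; [apply: ler_sum => g _ | apply: ler_sum => k _].
  apply: le_trans (convex_fun_lipschitz (cC g) (hP g) (hP' g)) _.
  by rewrite ler_wpM2l ?addr_ge0.
have mu_le : mu k / 2 * (`|T' k| - `|T k|) <= `|mu k| / 2 * d.
  apply: le_trans (ler_norm _) _; rewrite !normrM normfV normr_nat ler_wpM2l ?divr_ge0 //.
  exact: le_trans (ler_dist_dist _ _) (dT k).
have alpha_le : - (alpha (text A k) * (T' k - T k)) <= `|alpha (text A k)| * d.
  by apply: le_trans (ler_norm _) _; rewrite normrN normrM ler_wpM2l.
by rewrite mulrDl; lra.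
Qed.

Lemma objective_upd mu t m P T :
  objective A alpha (upd mu t m) P T =
  objective A alpha (upd mu t 0) P T + m / 2 * (`|T t| - Tbar A t).
Proof.
have split m' : \sum_k upd mu t m' k / 2 * (`|T k| - Tbar A k) =
    m' / 2 * (`|T t| - Tbar A t) + \sum_(k | k != t) mu k / 2 * (`|T k| - Tbar A k).
  by rewrite (bigD1 t) //= /upd eqxx; congr (_ + _); apply: eq_bigr => k /negbTE ->.
by rewrite /objective !split mul0r; ring.
Qed.

End AreaObjective.

Theorem proposition2 (R : realType) (nb : nat) (L G Tl : finType) (Ext : Type)
    (A : area R nb L G Tl Ext) (a : nat)
    (theta_ext alpha : Ext -> R) (mu : Tl -> R) :
  (forall l, 0 < x A l) ->
  (forall t, 0 < xbar A t) ->
  (forall g, strictly_convex (C A g)) ->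
  (forall t, 0 <= mu t) ->
  (exists P th T, feasible A a theta_ext P th T /\ forall t, T t = 0) ->
  forall t : Tl, exists mubar : R, 0 < mubar /\
    forall m : R, mubar <= m ->
    forall P th T, optimal A a theta_ext alpha (upd mu t m) P th T -> T t = 0.
Proof.
move=> _ _ C_strict _ [P0 [th0 [T0 [F0 T00]]]] t.
have cC g : convex_fun (C A g) by apply/strictly_convex_convex_fun/C_strict.
have zero_flow : exists P th T, feasible A a theta_ext P th T /\ T t = 0.
  by exists P0, th0, T0; split; last exact: T00.
have [K K0 nearK] := tie_flow_error_bound zero_flow.
pose W := \sum_g cost_slope A g + \sum_k (`|alpha (text A k)| + `|upd mu t 0 k| / 2).
have W0 : 0 <= W by rewrite addr_ge0 // sumr_ge0 // => *; rewrite ?addr_ge0 ?divr_ge0.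
exists (2 * W * K + 1); split => [|m m_ge P th T [F opt]].
  by rewrite ltr_pwDr // !mulr_ge0.
have [//|Tt0] := eqVneq (T t) 0; exfalso.
have r0 : 0 < `|T t| by rewrite normr_gt0.
have [P' [th' [T' [F' T't dP dT]]]] := nearK P th T F.
have [_ hP _ _ _] := F; have [_ hP' _ _ _] := F'.
have := objective_sub_le alpha (upd mu t 0) cC hP hP' dP dT.
have := opt P' th' T' F'; rewrite !(objective_upd A alpha mu t m) T't normr0.
have := ler_wpM2r (ltW r0) m_ge.
rewrite -/W; lra.
Qed.
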